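(* If a $\mathsf{BST}^{\otimes}$-conjunction $\Phi$ is fulfilled by a finite accessible $\otimes$-graph that admits a topological $\otimes$-order, then $\Phi$ is satisfied by a hereditarily finite set assignment (i.e. one with $\bigcup_{v}Mv\in\mathsf{HF}$).
   Context: Sets range over the von Neumann universe of well-founded sets; $\mathsf{HF}$ is the set of hereditarily finite sets. For sets $s,t$, $s\otimes t=\{\{u,v\} : u\in s,\ v\in t\}$. A $\mathsf{BST}^{\otimes}$-conjunction is a finite conjunction of literals of the forms $x=y\cup z$, $x=y\setminus z$, $x=y\otimes z$, $x\neq y$; a set assignment $M$ satisfies it if all literals are true when each variable $v$ is interpreted as $Mv$. A $\otimes$-graph $\mathcal G=(\mathcal P,\mathcal N,\mathcal T)$ consists of a set $\mathcal P$ of places, the set of nodes $\mathcal N=\mathcal P\otimes\mathcal P$ (the nonempty subsets of $\mathcal P$ with at most two elements), $\mathcal P\cap\mathcal N=\emptyset$, and a target map $\mathcal T:\mathcal N\to\mathcal P(\mathcal P)$. A source place is a place belonging to no $\mathcal T(A)$; a node $A$ is a $\otimes$-node if $\mathcal T(A)\neq\emptyset$. The accessible places form the smallest set of places containing all source places and containing $\mathcal T(A)$ whenever all places of $A$ belong to it; $\mathcal G$ is accessible if every place is accessible. A topological $\otimes$-order of $\mathcal G$ is a total order $\prec$ on $\mathcal P$ with $\max_\prec A\prec\max_\prec\mathcal T(A)$ for every $\otimes$-node $A$. A map $\mathfrak F:\mathrm{Vars}(\Phi)\to\mathcal P(\mathcal P)$ is $\mathcal G$-fulfilling for $\Phi$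 if: (a) $\mathfrak F(x)=\mathfrak F(y)\star\mathfrak F(z)$ for each conjunct $x=y\star z$, $\star\in\{\cup,\setminus\}$; (b) $\mathfrak F(x)\neq\mathfrak F(y)$ for each conjunct $x\neq y$; (c) for each conjunct $x=y\otimes z$: (c1) $\emptyset\neq\mathcal T(\{\upsilon,\zeta\})\subseteq\mathfrak F(x)$ for all $\upsilon\in\mathfrak F(y),\zeta\in\mathfrak F(z)$; (c2) $\mathfrak F(x)\subseteq\bigcup\{\mathcal T(A):A\in\mathfrak F(y)\otimes\mathfrak F(z)\}$; (c3) $\bigcup\{\mathcal T(A):A\in\mathcal N\setminus(\mathfrak F(y)\otimes\mathfrak F(z))\}\cap\mathfrak F(x)=\emptyset$. $\mathcal G$ fulfills $\Phi$ if such a map exists. *)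

From HB Require Import structures.
From mathcomp Require Import all_boot.
From Stdlib Require PeanoNat.

Set Implicit Arguments.
Unset Strict Implicit.
Unset Printing Implicit Defensive.

(* Hereditarily finite sets, via the Ackermann coding HF <-> nat:       *)
(*   x \in y  iff  bit x of y is 1.  This is a bijection between HF and  *)
(*   nat that turns set equality into nat equality (extensionality).     *)
Definition hf := nat.
Definition hmem (x y : hf) : bool := PeanoNat.Nat.testbit y x.
Definition hpair (u v : hf) : hf := PeanoNat.Nat.setbit (PeanoNat.Nat.setbit 0 u) v.

Inductive lit :=
| LUnion  of nat & nat & nat   (* x = y \cup z    *)
| LDiff   of nat & nat & nat   (* x = y \setminus z *)
| LTensor of nat & nat & nat   (* x = y \otimes z *)
| LNeq    of nat & nat.        (* x <> y          *)


Definition lit_eqb (a b : lit) : bool :=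
  match a, b with
  | LUnion x y z, LUnion x' y' z' => [&& x == x', y == y' & z == z']
  | LDiff x y z, LDiff x' y' z' => [&& x == x', y == y' & z == z']
  | LTensor x y z, LTensor x' y' z' => [&& x == x', y == y' & z == z']
  | LNeq x y, LNeq x' y' => (x == x') && (y == y')
  | _, _ => false
  end.
Lemma lit_eqP : Equality.axiom lit_eqb.
Proof.
case=> [x y z|x y z|x y z|x y] [x' y' z'|x' y' z'|x' y' z'|x' y'] /=;
  try (by constructor);
  try (apply: (iffP and3P) => [[/eqP-> /eqP-> /eqP->]|[-> -> ->]] //; by split);
  apply: (iffP andP) => [[/eqP-> /eqP->]|[-> ->]] //; by split.
Qed.
HB.instance Definition _ := hasDecEq.Build lit lit_eqP.

Definition lit_sat (M : nat -> hf) (l : lit) : Prop :=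
  match l with
  | LUnion x y z => forall w, hmem w (M x) <-> (hmem w (M y) \/ hmem w (M z))
  | LDiff x y z => forall w, hmem w (M x) <-> (hmem w (M y) /\ ~~ hmem w (M z))
  | LTensor x y z => forall w, hmem w (M x) <->
        exists u v, [/\ hmem u (M y), hmem v (M z) & w = hpair u v]
  | LNeq x y => M x <> M y
  end.

Definition satisfies (M : nat -> hf) (Phi : seq lit) : Prop :=
  forall l, l \in Phi -> lit_sat M l.


(* the target map T is given on all of {set P} but only its values on   *)
(* nodes are ever used.                                                 *)
Section Graph.
Variable P : finType.
Variable T : {set P} -> {set P}.

Definition is_node (A : {set P}) : bool := (0 < #|A| <= 2).

Definition in_otimes (S S' : {set P}) (A : {set P}) : Prop :=
  exists u v, [/\ u \in S, v \in S' & A = [set u; v]].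

Definition source_place (p : P) : Prop :=
  forall A, is_node A -> p \notin T A.

Definition otimes_node (A : {set P}) : Prop := is_node A /\ T A != set0.

Inductive accessible : P -> Prop :=
| acc_src p : source_place p -> accessible p
| acc_step A p : is_node A -> (forall a, a \in A -> accessible a) ->
                 p \in T A -> accessible p.

Definition accessible_graph : Prop := forall p : P, accessible p.

Definition strict_total_order (lt : rel P) : Prop :=
  [/\ forall p, ~~ lt p p,
      forall p q r, lt p q -> lt q r -> lt p r &
      forall p q, p != q -> lt p q || lt q p].

Definition is_max (lt : rel P) (A : {set P}) (m : P) : Prop :=
  m \in A /\ forall a, a \in A -> a = m \/ lt a m.

Definition topological_order (lt : rel P) : Prop :=
  strict_total_order lt /\
  forall A, otimes_node A ->
    forall m1 m2, is_max lt A m1 -> is_max lt (T A) m2 -> lt m1 m2.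

Definition lit_fulfilled (F : nat -> {set P}) (l : lit) : Prop :=
  match l with
  | LUnion x y z => F x = F y :|: F z
  | LDiff x y z => F x = F y :\: F z
  | LNeq x y => F x <> F y
  | LTensor x y z =>
      [/\ forall u v, u \in F y -> v \in F z ->
                     T [set u; v] != set0 /\ T [set u; v] \subset F x,
          forall p, p \in F x ->
                     exists A, in_otimes (F y) (F z) A /\ p \in T A &
          forall A, is_node A -> ~ in_otimes (F y) (F z) A ->
                     T A :&: F x = set0]
  end.

Definition fulfilling (F : nat -> {set P}) (Phi : seq lit) : Prop :=
  forall l, l \in Phi -> lit_fulfilled F l.

Definition fulfills (Phi : seq lit) : Prop := exists F, fulfilling F Phi.

End Graph.

From mathcomp Require Import all_boot zify.
From Stdlib Require PeanoNat Classical.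

Set Implicit Arguments.
Unset Strict Implicit.
Unset Printing Implicit Defensive.

(* Interpret each variable x by the set of all w in HF whose class [cls w] lies
   in F x, for a partial classification [cls] of HF by places: sources classify
   three-element "seeds", and a pair {u, v} with cls u = p, cls v = q is
   classified into T {p, q}, namely into r if {u, v} is one of finitely many
   designated witnesses of r, and otherwise into a place of T {p, q} above p and q
   in the topological order.  The interpretation commutes with union and
   difference, and (c1)-(c3) make x = y ⊗ z true.  Accessibility provides
   witnesses of every place, so the interpretation determines F x, which gives
   the disequalities.  Finally, the default choice raises the height, so every
   classified set lies below a tower of exponentials of its height: the model is
   hereditarily finite. *)

Definition enc (s : seq nat) : hf := foldr (fun w acc => PeanoNat.Nat.setbit acc w) 0 s.

Lemma hmem_enc x s : hmem x (enc s) = (x \in s).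
Proof.
elim: s => [|a s IHs]; first by rewrite /hmem PeanoNat.Nat.bits_0.
rewrite /hmem /= in_cons; have [<-|ne] := eqVneq x a.
  by rewrite PeanoNat.Nat.setbit_eq.
by rewrite PeanoNat.Nat.setbit_neq //; apply/eqP; rewrite eq_sym.
Qed.

Lemma hmem_hpair x u v : hmem x (hpair u v) = (x == u) || (x == v).
Proof. by rewrite -[hpair u v]/(enc [:: v; u]) hmem_enc !inE orbC. Qed.

Lemma hf_ext a b : (forall x, hmem x a = hmem x b) -> a = b.
Proof. exact: PeanoNat.Nat.bits_inj. Qed.

Lemma hmem_ltn u w : hmem u w -> u < w.
Proof.
rewrite /hmem ltnNge; apply: contraTN => le_wu; apply/negP.
have lt_u_pow := PeanoNat.Nat.pow_gt_lin_r 2 u (le_n 2).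
by rewrite PeanoNat.Nat.testbit_eqb PeanoNat.Nat.div_small //; lia.
Qed.

Lemma pow2E m : PeanoNat.Nat.pow 2 m = 2 ^ m.
Proof. by elim: m => // m IHm; rewrite expnS -IHm. Qed.

Lemma hf_ltn_exp2 w m : (forall u, hmem u w -> u < m) -> w < 2 ^ m.
Proof.
move=> w_lt_m; rewrite -pow2E.
have -> : w = PeanoNat.Nat.modulo w (PeanoNat.Nat.pow 2 m).
  apply: hf_ext => u; rewrite /hmem; have [lt_um|le_mu] := ltnP u m.
    by rewrite PeanoNat.Nat.mod_pow2_bits_low //; lia.
  rewrite PeanoNat.Nat.mod_pow2_bits_high; last by lia.
  by apply/negP => /w_lt_m; lia.
by apply/ltP/PeanoNat.Nat.mod_upper_bound/PeanoNat.Nat.pow_nonzero.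
Qed.

Lemma eq_pair_cases (X : eqType) (a b c d : X) :
  (forall z, (z == a) || (z == b) = (z == c) || (z == d)) ->
  (a = c /\ b = d) \/ (a = d /\ b = c).
Proof.
move=> E; have := E a; have := E b; have := E c; have := E d.
rewrite !eqxx ?orbT /= => /orP[]/eqP ? /orP[]/eqP ? /esym/orP[]/eqP ? /esym/orP[]/eqP ?;
  by subst; auto.
Qed.

Lemma hpair_inj u v u' v' :
  hpair u v = hpair u' v' -> (u = u' /\ v = v') \/ (u = v' /\ v = u').
Proof. by move=> E; apply: eq_pair_cases => z; rewrite -!hmem_hpair E. Qed.

Lemma ltn_hpairl u v : u < hpair u v.
Proof. by apply: hmem_ltn; rewrite hmem_hpair eqxx. Qed.

Lemma ltn_hpairr u v : v < hpair u v.
Proof. by apply: hmem_ltn; rewrite hmem_hpair eqxx orbT. Qed.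

Lemma hpairC u v : hpair u v = hpair v u.
Proof. by apply: hf_ext => x; rewrite !hmem_hpair orbC. Qed.

Lemma set2_inj (X : finType) (a b c d : X) :
  [set a; b] = [set c; d] -> (a = c /\ b = d) \/ (a = d /\ b = c).
Proof. by move=> E; apply: eq_pair_cases => z; rewrite -!in_set2 E. Qed.

Lemma is_node_set2 (X : finType) (a b : X) : is_node [set a; b].
Proof. by rewrite /is_node cards2; case: (a != b). Qed.

Lemma is_nodeP (X : finType) (A : {set X}) : is_node A -> exists a b, A = [set a; b].
Proof.
case/andP=> A_gt0 A_le2.
have [/cards1P[a ->]|/cards2P[a [b [_ ->]]]] : (#|A| == 1) \/ (#|A| == 2) by lia.
  by exists a, a; rewrite setUid.
by exists a, b.
Qed.

Section Ranks.
Variables (P : finType) (T : {set P} -> {set P}).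

Definition ranked (rank : P -> nat) : Prop :=
  forall r, source_place T r \/
    exists a b, [/\ r \in T [set a; b], rank a < rank r & rank b < rank r].

Fixpoint stage k : {set P} :=
  if k is k'.+1 then
    stage k' :|: [set r | [exists A, [&& is_node A, A \subset stage k' & r \in T A]]]
  else [set r | [forall A, is_node A ==> (r \notin T A)]].

Lemma stage_mono : {homo stage : k l / k <= l >-> k \subset l}.
Proof. by apply: homo_leq => [//|k l m|k]; [exact: subset_trans | exact: subsetUl]. Qed.

Lemma accessible_stage p : accessible T p -> exists k, p \in stage k.
Proof.
elim=> [q src_q|A q nodeA _ IHA qTA].
  by exists 0; rewrite inE; apply/forallP => A; apply/implyP/src_q.
have [a [b defA]] := is_nodeP nodeA.
have [ka ak] : exists k, a \in stage k by apply: IHA; rewrite defA set21.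
have [kb bk] : exists k, b \in stage k by apply: IHA; rewrite defA set22.
exists (maxn ka kb).+1; rewrite /= inE; apply/orP; right; rewrite inE.
apply/existsP; exists A; rewrite nodeA qTA andbT defA subUset !sub1set.
by rewrite (subsetP (stage_mono (leq_maxl ka kb))) ?(subsetP (stage_mono (leq_maxr ka kb))).
Qed.

Lemma accessible_ranked : accessible_graph T -> exists rank, ranked rank.
Proof.
move=> acc; pose rank p := ex_minn (accessible_stage (acc p)).
have rank_min p k : p \in stage k -> rank p <= k by rewrite /rank; case: ex_minnP => m _; apply.
exists rank => r; rewrite /rank; case: ex_minnP => -[|k] /= r_k r_min.
  by left => A nodeA; move: r_k; rewrite inE => /forallP/(_ A); rewrite nodeA.
case/setUP: r_k => [/r_min|]; first by rewrite ltnn.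
rewrite inE => /existsP[A /and3P[nodeA sub_A rTA]]; right.
have [a [b defA]] := is_nodeP nodeA; exists a, b; rewrite -defA.
by split=> //; apply: rank_min; apply: (subsetP sub_A); rewrite defA ?set21 ?set22.
Qed.

End Ranks.

Section Heights.
Variables (P : finType) (T : {set P} -> {set P}).

Definition targets_above (height : P -> nat) : Prop :=
  forall A, otimes_node T A ->
    exists2 m, m \in T A & forall p, p \in A -> height p < height m.

Definition lt_height (lt : rel P) (m : P) : nat := #|[set a | lt a m]|.

Section StrictTotalOrder.
Variable lt : rel P.
Hypothesis lt_order : strict_total_order lt.

Lemma lt_height_mono a b : lt a b -> lt_height lt a < lt_height lt b.
Proof.
case: lt_order => lt_irr lt_trans _ lt_ab; apply: proper_card; apply/properP; split.
  by apply/subsetP => x; rewrite !inE => /lt_trans; apply.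
by exists a; rewrite !inE ?lt_ab ?(negbTE (lt_irr a)).
Qed.

Lemma exists_max (X : {set P}) : X != set0 -> exists m, is_max lt X m.
Proof.
case/set0Pn=> x xX; have [m mX m_max] := arg_maxnP (lt_height lt) xX.
exists m; split=> // a aX; case: lt_order => _ _ lt_total.
have [->|/lt_total/orP[]] := eqVneq a m; [by left | by right |].
by move/lt_height_mono; have := m_max a aX; lia.
Qed.

End StrictTotalOrder.

Lemma topological_height lt : topological_order T lt -> targets_above (lt_height lt).
Proof.
case=> lt_order lt_max A [nodeA TA_n0].
have A_n0 : A != set0 by rewrite -card_gt0; case/andP: nodeA.
have [[m1 max1] [m2 max2]] := (exists_max lt_order A_n0, exists_max lt_order TA_n0).
exists m2 => [|p pA]; first by case: max2.
case: (lt_order) => _ lt_trans _; have lt12 := lt_max A (conj nodeA TA_n0) _ _ max1 max2.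
by apply: (lt_height_mono lt_order); case: max1 => _ /(_ p pA) [->|/lt_trans]; auto.
Qed.

End Heights.

Section Model.
Variables (P : finType) (T : {set P} -> {set P}) (rank height : P -> nat).
Hypotheses (rankP : ranked T rank) (heightP : targets_above T height).

Definition parents (r : P) : option (P * P) :=
  [pick ab : P * P | [&& rank ab.1 < rank r, rank ab.2 < rank r & r \in T [set ab.1; ab.2]]].

Lemma parents_Some r a b :
  parents r = Some (a, b) -> [/\ r \in T [set a; b], rank a < rank r & rank b < rank r].
Proof. by rewrite /parents; case: pickP => // -[a' b'] /and3P[? ? ?] [<- <-]. Qed.

Lemma parents_None r : parents r = None -> source_place T r.
Proof.
rewrite /parents; case: pickP => // no_parents _.
have [//|[a [b [rT ra rb]]]] := rankP r.
by have := no_parents (a, b); rewrite /= ra rb rT.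
Qed.

Definition nwit := (2 * #|P|).+1.

Definition idx (r : P) : nat := enum_rank r.

Lemma idx_lt r : idx r < #|P|.
Proof. exact: ltn_ord. Qed.

Lemma idx_inj : injective idx.
Proof. by move=> r r' /val_inj/enum_rank_inj. Qed.

(* Shifting the index of the second component
   by idx r + 1 keeps apart the witnesses of places with the same parents, and
   two shifts never cancel since 0 < idx r + idx r' + 2 < nwit. *)
Definition shift (r : P) (t : 'I_nwit) : 'I_nwit :=
  Ordinal (ltn_pmod (t + idx r + 1) (ltn0Sn _)).

Lemma shiftE r t : shift r t = (t + idx r + 1) %% nwit :> nat.
Proof. by []. Qed.

Lemma shift_inj t : injective (shift^~ t).
Proof.
move=> r r' /(congr1 (@nat_of_ord nwit)); rewrite !shiftE -!addnA => /eqP.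
have := idx_lt r; have := idx_lt r'; rewrite /nwit => lt_r' lt_r.
rewrite eqn_modDl !modn_small; first by move/eqP/addIn/idx_inj.
all: lia.
Qed.

Lemma shift_shift_neq r r' t : shift r' (shift r t) != t.
Proof.
apply/eqP => /(congr1 (@nat_of_ord nwit)); rewrite !shiftE -addnA modnDml -!addnA.
rewrite -[in X in _ = X](modn_small (ltn_ord t)) => /eqP.
rewrite -[X in _ == X %% nwit](addn0 t).
have := idx_lt r; have := idx_lt r'; rewrite /nwit => lt_r' lt_r.
rewrite eqn_modDl mod0n modn_small; last by lia.
by rewrite addnCA add1n.
Qed.

Definition seed (rt : P * 'I_nwit) : hf := enc [:: 0; 1; (enum_rank rt).+2].

Lemma seed_inj : injective seed.
Proof.
move=> rt rt' E; have : hmem (enum_rank rt).+2 (seed rt') by rewrite -E hmem_enc !inE eqxx orbT.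
by rewrite hmem_enc !inE /= => /eqP[] /val_inj/enum_rank_inj.
Qed.

Lemma seed_neq_hpair rt u v : seed rt <> hpair u v.
Proof.
move=> E; have mem_seed x : (x == u) || (x == v) = [|| x == 0, x == 1 | x == (enum_rank rt).+2].
  by rewrite -hmem_hpair -E hmem_enc !inE.
have := mem_seed 0; have := mem_seed 1; have := mem_seed (enum_rank rt).+2.
rewrite !eqxx /= ?orbT; lia.
Qed.

Fixpoint witness_fuel n r t : hf :=
  if n is n'.+1 then
    if parents r is Some (a, b) then
      hpair (witness_fuel n' a t) (witness_fuel n' b (shift r t))
    else seed (r, t)
  else seed (r, t).

Definition witness r t : hf := witness_fuel (rank r) r t.

Lemma witness_fuel_stable n m r t :
  rank r <= n -> rank r <= m -> witness_fuel n r t = witness_fuel m r t.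
Proof.
elim: n m r t => [|n IHn] [|m] r t //= le_rn le_rm;
  case E: (parents r) => [[a b]|] //; have [_ lt_a lt_b] := parents_Some E; try lia.
by rewrite (IHn m a) ?(IHn m b) //; lia.
Qed.

Lemma witnessE r t :
  witness r t = if parents r is Some (a, b) then hpair (witness a t) (witness b (shift r t))
                else seed (r, t).
Proof.
rewrite /witness; case E: (parents r) => [[a b]|]; last by case: (rank r) => //= n; rewrite E.
have [_ lt_a lt_b] := parents_Some E; case: (rank r) lt_a lt_b => // n lt_a lt_b /=.
rewrite E (@witness_fuel_stable n (rank a)) ?(@witness_fuel_stable n (rank b)) //; lia.
Qed.

Lemma witness_inj r r' t t' : witness r t = witness r' t' -> r = r' /\ t = t'.
Proof.
have [n] := ubnP (witness r t); elim: n r r' t t' => // n IHn r r' t t'.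
rewrite [witness r t]witnessE [witness r' t']witnessE.
case: (parents r) => [[a b]|]; case: (parents r') => [[a' b']|] lt_w; last 3 first.
- by move/esym/seed_neq_hpair.
- by move/seed_neq_hpair.
- by case/seed_inj.
have lt_a : witness a t < n := leq_trans (ltn_hpairl _ _) lt_w.
have lt_b : witness b (shift r t) < n := leq_trans (ltn_hpairr _ _) lt_w.
case/hpair_inj=> [[/(IHn _ _ _ _ lt_a)[_ <-] /(IHn _ _ _ _ lt_b)[_ /shift_inj]] //|].
case=> /(IHn _ _ _ _ lt_a)[_ t_shift] /(IHn _ _ _ _ lt_b)[_ shift_t].
by have := shift_shift_neq r r' t; rewrite shift_t -t_shift eqxx.
Qed.

Definition up_target (A : {set P}) : option P :=
  [pick m in T A | [forall p in A, height p < height m]].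

Lemma up_target_Some A m :
  up_target A = Some m -> m \in T A /\ forall p, p \in A -> height p < height m.
Proof.
rewrite /up_target; case: pickP => // m' /andP[mTA /forall_inP m_up] [<-].
by split=> // p /m_up.
Qed.

Lemma up_target_otimes A : otimes_node T A -> up_target A != None.
Proof.
move/heightP=> [m mTA /forall_inP m_up].
by rewrite /up_target; case: pickP => // /(_ m); rewrite mTA m_up.
Qed.

Definition classify (A : {set P}) (w : hf) : option P :=
  if [pick rt : P * 'I_nwit | w == witness rt.1 rt.2] is Some (r, _) then
    if r \in T A then Some r else up_target A
  else up_target A.

Lemma classify_in A w r : classify A w = Some r -> r \in T A.
Proof.
have up_in : up_target A = Some r -> r \in T A by case/up_target_Some.
by rewrite /classify; case: pickP => [[r' t] _|_ //]; case: ifP => // ? [<-].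
Qed.

Lemma classify_cases A w r :
  classify A w = Some r -> (exists t, w = witness r t) \/ up_target A = Some r.
Proof.
rewrite /classify; case: pickP => [[r' t] /= /eqP-> |_]; last by right.
by case: ifP => _; [case=> <-; left; exists t | right].
Qed.

Lemma classify_witness A r t : r \in T A -> classify A (witness r t) = Some r.
Proof.
move=> rTA; rewrite /classify; case: pickP => [[r' t'] /= /eqP/witness_inj[<- _]|].
  by rewrite rTA.
by move/(_ (r, t)); rewrite eqxx.
Qed.

Lemma classify_otimes A w : otimes_node T A -> classify A w != None.
Proof.
move/up_target_otimes=> upA; rewrite /classify.
by case: pickP => [[r t] _|_ //]; case: ifP.
Qed.

Definition cls_step (cls : hf -> option P) (w : hf) : option P :=
  if [pick uv : 'I_w * 'I_w | w == hpair uv.1 uv.2] is Some (u, v) then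
    if (cls u, cls v) is (Some p, Some q) then classify [set p; q] w else None
  else if [pick rt | w == seed rt] is Some (r, _) then
    if parents r is None then Some r else None
  else None.

Fixpoint cls_fuel n w : option P :=
  if n is n'.+1 then cls_step (cls_fuel n') w else None.

Definition cls (w : hf) : option P := cls_fuel w.+1 w.

Lemma cls_step_ext f g w :
  (forall u, u < w -> f u = g u) -> cls_step f w = cls_step g w.
Proof. by move=> fg; rewrite /cls_step; case: pickP => [[u v] _|_] //=; rewrite !fg. Qed.

Lemma cls_fuel_stable n m w : w < n -> w < m -> cls_fuel n w = cls_fuel m w.
Proof.
elim: n m w => [|n IHn] [|m] w //= lt_wn lt_wm.
by apply: cls_step_ext => u lt_uw; apply: IHn; lia.
Qed.

Lemma clsE w : cls w = cls_step cls w.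
Proof. by apply: cls_step_ext => u lt_uw; apply: cls_fuel_stable. Qed.

Lemma cls_hpair u v p q : cls u = Some p -> cls v = Some q ->
  cls (hpair u v) = classify [set p; q] (hpair u v).
Proof.
move=> cu cv; rewrite clsE /cls_step; case: pickP => [[u' v'] /= /eqP|]; last first.
  by move/(_ (Ordinal (ltn_hpairl u v), Ordinal (ltn_hpairr u v))); rewrite /= eqxx.
case/hpair_inj=> -[<- <-]; first by rewrite cu cv.
by rewrite cu cv setUC.
Qed.

Lemma cls_seed r t : parents r = None -> cls (seed (r, t)) = Some r.
Proof.
move=> no_parents; rewrite clsE /cls_step; case: pickP => [[u v] /= /eqP/seed_neq_hpair //|_].
case: pickP => [[r' t'] /= /eqP/seed_inj[<- _]|]; first by rewrite no_parents.
by move/(_ (r, t)); rewrite eqxx.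
Qed.

Lemma clsP w r : cls w = Some r ->
  (exists u v p q, [/\ w = hpair u v, cls u = Some p, cls v = Some q
                     & classify [set p; q] w = Some r]) \/
  (parents r = None /\ exists t, w = seed (r, t)).
Proof.
rewrite clsE /cls_step; case: pickP => [[u v] /= /eqP w_uv | _].
  case cu: (cls u) => [p|] //; case cv: (cls v) => [q|] // E.
  by left; exists u, v, p, q.
case: pickP => [[r' t] /= /eqP-> | _ //].
by case E: (parents r') => // -[<-]; right; split=> //; exists t.
Qed.

Lemma cls_witness r t : cls (witness r t) = Some r.
Proof.
have [n] := ubnP (rank r); elim: n r t => // n IHn r t lt_rn.
rewrite witnessE; case E: (parents r) => [[a b]|]; last exact: cls_seed.
have [rT lt_a lt_b] := parents_Some E.
have def_w : hpair (witness a t) (witness b (shift r t)) = witness r t.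
  by rewrite (witnessE r) E.
by rewrite (cls_hpair (IHn a _ _) (IHn b _ _)) ?def_w ?classify_witness //; lia.
Qed.

Definition base : nat := (\max_(rt : P * 'I_nwit) maxn (witness rt.1 rt.2) (seed rt)).+1.

Definition tower k : nat := iter k (expn 2) base.

Lemma base_le_tower k : base <= tower k.
Proof. by elim: k => // k IHk; rewrite /tower iterS (leq_trans IHk) // ltnW // ltn_expl. Qed.

Lemma tower_mono : {homo tower : k l / k <= l}.
Proof. by apply: homo_leq => // [k l m|k]; [exact: leq_trans | rewrite ltnW // ltn_expl]. Qed.

Lemma witness_lt_tower r t k : witness r t < tower k.
Proof.
apply: leq_trans (base_le_tower k); rewrite ltnS.
exact: leq_trans (leq_maxl _ (seed (r, t))) (leq_bigmax (r, t)).
Qed.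

Lemma seed_lt_tower rt k : seed rt < tower k.
Proof.
apply: leq_trans (base_le_tower k); rewrite ltnS.
exact: leq_trans (leq_maxr (witness rt.1 rt.2) _) (leq_bigmax rt).
Qed.

Lemma cls_lt_tower w r : cls w = Some r -> w < tower (height r).
Proof.
have [n] := ubnP (height r); elim: n w r => // n IHn w r lt_rn.
case/clsP=> [[u [v [p [q [-> cu cv]]]]]|[_ [t ->]]]; last exact: seed_lt_tower.
case/classify_cases=> [[t ->]|]; first exact: witness_lt_tower.
case/up_target_Some=> _ r_up; have lt_p := r_up p (set21 p q); have lt_q := r_up q (set22 p q).
case: (height r) lt_p lt_q lt_rn => [//|k] lt_p lt_q lt_rn.
rewrite /tower iterS; apply: hf_ltn_exp2 => z; rewrite hmem_hpair => /orP[]/eqP->.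
  by apply: leq_trans (IHn _ _ _ cu) (tower_mono _); lia.
by apply: leq_trans (IHn _ _ _ cv) (tower_mono _); lia.
Qed.

Definition cls_bound : nat := tower (\max_r height r).

Lemma cls_lt_bound w r : cls w = Some r -> w < cls_bound.
Proof. by move/cls_lt_tower/leq_trans; apply; apply/tower_mono/leq_bigmax. Qed.

Definition cls_in (X : {set P}) (w : hf) : bool := if cls w is Some r then r \in X else false.

Lemma cls_in_setU X Y w : cls_in (X :|: Y) w = cls_in X w || cls_in Y w.
Proof. by rewrite /cls_in; case: (cls w) => // r; rewrite inE. Qed.

Lemma cls_in_setD X Y w : cls_in (X :\: Y) w = cls_in X w && ~~ cls_in Y w.
Proof. by rewrite /cls_in; case: (cls w) => // r; rewrite inE andbC. Qed.

Lemma cls_in_witness X r t : cls_in X (witness r t) = (r \in X).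
Proof. by rewrite /cls_in cls_witness. Qed.

Lemma cls_in_hpair (X Y Z : {set P}) u v :
  (forall p q, p \in Y -> q \in Z -> T [set p; q] != set0 /\ T [set p; q] \subset X) ->
  cls_in Y u -> cls_in Z v -> cls_in X (hpair u v).
Proof.
rewrite /cls_in => YZ_X; case cu: (cls u) => [p|] // pY; case cv: (cls v) => [q|] // qZ.
have [TA_n0 TA_X] := YZ_X p q pY qZ; rewrite (cls_hpair cu cv).
have /(classify_otimes (hpair u v)) : otimes_node T [set p; q].
  by split; first exact: is_node_set2.
by case E: classify => [r|] // _; apply: (subsetP TA_X); exact: classify_in E.
Qed.

Lemma cls_in_hpair_inv (X Y Z : {set P}) w :
  (forall r, r \in X -> exists A, in_otimes Y Z A /\ r \in T A) ->
  (forall A, is_node A -> ~ in_otimes Y Z A -> T A :&: X = set0) ->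
  cls_in X w -> exists u v, [/\ cls_in Y u, cls_in Z v & w = hpair u v].
Proof.
rewrite /cls_in => X_YZ YZ_only; case E: (cls w) => [r|] // rX.
have [_ [[a [b [_ _ ->]]] rT]] := X_YZ r rX.
case/clsP: E => [[u [v [p [q [-> cu cv /classify_in rTpq]]]]]|[/parents_None src_r _]]; last first.
  by have := src_r _ (is_node_set2 a b); rewrite rT.
have [p' [q' [p'Y q'Z /set2_inj]]] : in_otimes Y Z [set p; q].
  apply: Classical_Prop.NNPP => /(YZ_only _ (is_node_set2 p q)) /setP /(_ r).
  by rewrite !inE rTpq rX.
by case=> -[ep eq]; [exists u, v | exists v, u]; rewrite cu cv ep eq // hpairC.
Qed.

Definition model (F : nat -> {set P}) (x : nat) : hf :=
  enc [seq w <- iota 0 cls_bound | cls_in (F x) w].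

Lemma hmem_model F x w : hmem w (model F x) = cls_in (F x) w.
Proof.
rewrite /model hmem_enc mem_filter mem_iota /cls_in.
by case E: (cls w) => [r|] //; rewrite add0n (cls_lt_bound E) leq0n !andbT.
Qed.

Lemma lit_fulfilled_sat F l : lit_fulfilled T F l -> lit_sat (model F) l.
Proof.
case: l => [x y z|x y z|x y z|x y] /=.
- by move=> Fx w; rewrite !hmem_model Fx cls_in_setU; split=> /orP.
- by move=> Fx w; rewrite !hmem_model Fx cls_in_setD; split=> /andP.
- move=> [YZ_X X_YZ YZ_only] w; rewrite hmem_model; split.
    by case/(cls_in_hpair_inv X_YZ YZ_only)=> u [v]; exists u, v; rewrite !hmem_model.
  by case=> u [v []]; rewrite !hmem_model => Yu Zv ->; exact: cls_in_hpair YZ_X Yu Zv.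
- move=> neq_F E; apply: neq_F; apply/setP => r.
  by rewrite -!(cls_in_witness _ r ord0) -!hmem_model E.
Qed.

Lemma fulfilling_satisfies F Phi : fulfilling T F Phi -> satisfies (model F) Phi.
Proof. by move=> fulF l /fulF/lit_fulfilled_sat. Qed.

End Model.

Theorem lemma15 (Phi : seq lit) (P : finType) (T : {set P} -> {set P}) :
  accessible_graph T ->
  (exists lt : rel P, topological_order T lt) ->
  fulfills T Phi ->
  exists M : nat -> hf, satisfies M Phi.
Proof.
move=> /accessible_ranked[rank rankP] [lt /topological_height heightP] [F fulF].
by exists (model T rank (lt_height lt) F); exact (fulfilling_satisfies rankP heightP fulF).
Qed.
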